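(* Let $i\ge 0$ be an integer. Every disk of an $\alpha_i$-metric graph $G$ is $d^{2i-1}$-convex. In particular, the center $C(G)$ of $G$ is $d^{2i-1}$-convex.
   Context: All graphs are finite, connected, unweighted, undirected, simple; $d(u,v)$ is the shortest-path distance. $I(u,v)=\{x: d(u,x)+d(x,v)=d(u,v)\}$. A graph is $\alpha_i$-metric if for all vertices $u,v,w,x$: whenever $v\in I(u,w)$, $w\in I(v,x)$ and $v,w$ are adjacent, then $d(u,x)\ge d(u,v)+d(v,x)-i$. A disk is $D(v,r)=\{u: d(u,v)\le r\}$. A vertex set $S$ is $d^k$-convex if for all $x,y\in S$ with $d(x,y)\ge k$, $I(x,y)\subseteq S$. $e(v)=\max_u d(u,v)$, $rad(G)=\min_v e(v)$, $C(G)=\{v:e(v)=rad(G)\}$. *)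

(* Finite simple graphs as a symmetric irreflexive relation
   [e : rel T] on a finite type [T]. *)
From mathcomp Require Import all_boot.
Set Implicit Arguments. Unset Strict Implicit. Unset Printing Implicit Defensive.

Section Graph.
Variables (T : finType) (e : rel T).

Fixpoint ball (u : T) (n : nat) : {set T} :=
  match n with
  | 0 => [set u]
  | n'.+1 => ball u n' :|: [set y | [exists x in ball u n', e x y]]
  end.

(* Shortest-path distance: least n such that v is within n steps of u
   (for connected graphs the search range 0..#|T|-1 suffices). *)
Definition dist (u v : T) : nat := find (fun n => v \in ball u n) (iota 0 #|T|).

Definition interval (u v : T) : {set T} :=
  [set x | dist u x + dist x v == dist u v].

(* alpha_i-metric: d(u,x) >= d(u,v) + d(v,x) - i, stated without subtraction. *)
Definition alpha_metric (i : nat) : Prop :=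
  forall u v w x : T,
    v \in interval u w -> w \in interval v x -> e v w ->
    dist u v + dist v x <= dist u x + i.

Definition disk (v : T) (r : nat) : {set T} := [set u | dist u v <= r].

Definition dk_convex (k : nat) (S : {set T}) : Prop :=
  forall x y : T, x \in S -> y \in S -> k <= dist x y -> interval x y \subset S.

Definition ecc (v : T) : nat := \max_(u : T) dist u v.
Definition rad : nat := \big[minn/#|T|]_(v : T) ecc v.
Definition center : {set T} := [set v | ecc v == rad].

End Graph.

From mathcomp Require Import all_boot order zify.

(* Suppose x, y lie in D(c, r), d(x, y) >= 2i - 1, but some vertex of I(x, y)
   lies outside D(c, r). Let k > r be the largest distance to c over I(x, y),
   attained at a nearest to x and at b nearest to y. The neighbour a' of a on a
   geodesic towards x lies in I(x, y) with d(a', c) = k - 1, so (c, a', a, y)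
   is an alpha_i configuration, giving k + d(x, y) <= d(y, c) + i + d(x, a);
   symmetrically k + d(x, y) <= d(x, c) + i + d(y, b). Since
   d(x, a) + d(b, y) <= d(x, y), adding up yields d(x, y) <= 2i - 2.
   The center is the intersection of the disks D(u, rad G). *)

Set Implicit Arguments.
Unset Strict Implicit.
Unset Printing Implicit Defensive.

Lemma exists_max_min_lex (T : finType) (S : {set T}) (f g : T -> nat) :
  S != set0 ->
  exists2 a, a \in S &
    (forall w, w \in S -> f w <= f a) /\
    (forall w, w \in S -> g w < g a -> f w < f a).
Proof.
case/set0Pn => x0 Sx0.
case: (@arg_maxnP T x0 (fun w => w \in S) f Sx0) => m Sm max_m.
have Pm : (m \in S) && (f m == f m) by rewrite Sm eqxx.
case: (@arg_minnP T m (fun w => (w \in S) && (f w == f m)) g Pm)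
  => a /andP[Sa /eqP fa] min_a.
exists a => //; split=> [w Sw | w Sw lt_g]; rewrite fa; first exact: max_m.
have /= le_fw := max_m w Sw.
rewrite ltn_neqAle le_fw andbT; apply: contraTneq lt_g => fw.
by rewrite -leqNgt min_a // Sw fw eqxx.
Qed.

Lemma dk_convex_bigcap (T I : finType) (e : rel T) k (F : I -> {set T}) :
  (forall j, dk_convex e k (F j)) -> dk_convex e k (\bigcap_j F j).
Proof.
move=> convF x y /bigcapP Fx /bigcapP Fy le_k; apply/bigcapsP => j _.
exact: convF (Fx j isT) (Fy j isT) le_k.
Qed.

Section Balls.
Variables (T : finType) (e : rel T).
Hypothesis e_sym : symmetric e.

Lemma ball_refl u n : u \in ball e u n.
Proof. by elim: n => [|n IH] /=; rewrite ?set11 // inE IH. Qed.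

Lemma ball_subset u n m : n <= m -> ball e u n \subset ball e u m.
Proof.
elim: m => [|m IH]; first by rewrite leqn0 => /eqP->.
rewrite leq_eqVlt => /predU1P[-> // | /IH sub_nm].
by apply: subset_trans sub_nm _; apply: subsetUl.
Qed.

Lemma ballSP u n w :
  reflect (w \in ball e u n \/ exists2 v, v \in ball e u n & e v w)
          (w \in ball e u n.+1).
Proof.
rewrite /= !inE; apply: (iffP orP) => -[-> | H]; [by left | | by left | right].
  by move: H => /existsP[v /andP[]]; right; exists v.
by case: H => v uv vw; apply/existsP; exists v; rewrite uv.
Qed.

Lemma ball_step u n v w : v \in ball e u n -> e v w -> w \in ball e u n.+1.
Proof. by move=> uv vw; apply/ballSP; right; exists v. Qed.

Lemma ball_add u v w n m :
  v \in ball e u n -> w \in ball e v m -> w \in ball e u (n + m).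
Proof.
move=> uv; elim: m w => [|m IH] w; first by rewrite addn0 => /set1P->.
rewrite addnS => /ballSP[/IH | [x /IH ux xw]]; last exact: ball_step ux xw.
exact/subsetP/ball_subset.
Qed.

Lemma ball_sym u v n : v \in ball e u n -> u \in ball e v n.
Proof.
elim: n v => [|n IH] v; first by move=> /set1P->; apply: set11.
case/ballSP => [/IH | [x /IH xu xv]]; first exact/subsetP/ball_subset.
have vx : x \in ball e v 1 by apply: ball_step (ball_refl v 0) _; rewrite e_sym.
by rewrite -add1n; apply: ball_add vx xu.
Qed.

Lemma path_ball u p : path e u p -> last u p \in ball e u (size p).
Proof.
elim: p u => [|x p IH] u; first by move=> _; apply: (ball_refl u 0).
case/andP => ux /IH xp.
by have := ball_add (ball_step (ball_refl u 0) ux) xp; rewrite add1n.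
Qed.

Lemma ball_connect u v :
  connect e u v -> exists2 n, n < #|T| & v \in ball e u n.
Proof.
case/connectP => p /shortenP[q uq /card_uniqP /= card_q _] ->.
exists (size q); last exact: path_ball.
by rewrite -ltnS -card_q; apply: max_card.
Qed.

End Balls.

Section Distance.
Variables (T : finType) (e : rel T).
Hypothesis e_sym : symmetric e.
Hypothesis e_conn : forall u v : T, connect e u v.

Let has_ball u v : has (fun n => v \in ball e u n) (iota 0 #|T|).
Proof.
have [n lt_n uv] := ball_connect (e_conn u v).
by apply/hasP; exists n; rewrite ?mem_iota.
Qed.

Lemma dist_ltT u v : dist e u v < #|T|.
Proof. by have := has_ball u v; rewrite has_find size_iota. Qed.

Lemma dist_ball u v : v \in ball e u (dist e u v).
Proof. by have := nth_find 0 (has_ball u v); rewrite nth_iota ?dist_ltT. Qed.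

Lemma mem_ball_dist u v n : (v \in ball e u n) = (dist e u v <= n).
Proof.
apply/idP/idP => [uv | le_n]; last first.
  by apply: subsetP (dist_ball u v); apply: ball_subset.
rewrite leqNgt; apply/negP => lt_n.
have := before_find 0 lt_n; rewrite nth_iota ?add0n ?uv //.
exact: ltn_trans lt_n (dist_ltT u v).
Qed.

Lemma dist_sym u v : dist e u v = dist e v u.
Proof.
apply/eqP; rewrite eqn_leq -!mem_ball_dist.
by apply/andP; split; apply: (ball_sym e_sym); apply: dist_ball.
Qed.

Lemma dist_triangle u v w : dist e u w <= dist e u v + dist e v w.
Proof.
by rewrite -mem_ball_dist; apply: ball_add (dist_ball u v) (dist_ball v w).
Qed.

Lemma dist_edge u v : e u v -> dist e u v <= 1.
Proof.
by move=> uv; rewrite -mem_ball_dist; apply: ball_step (ball_refl e u 0) uv.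
Qed.

Lemma dist_eq0 u v : (dist e u v == 0) = (u == v).
Proof. by rewrite -leqn0 -mem_ball_dist inE eq_sym. Qed.

Lemma dist_pred x a :
  0 < dist e x a -> exists2 a', e a' a & (dist e x a').+1 = dist e x a.
Proof.
move=> pos_xa; move: (dist_ball x a); rewrite -{1}(prednK pos_xa).
case/ballSP => [| [a' xa' a'a]].
  by rewrite mem_ball_dist leqNgt ltn_predL pos_xa.
exists a' => //; move: xa'; rewrite mem_ball_dist.
have := dist_triangle x a' a; have := dist_edge a'a; lia.
Qed.

Lemma interval_sym x y : interval e y x = interval e x y.
Proof.
apply/setP => w.
by rewrite !inE addnC (dist_sym y) (dist_sym w) (dist_sym y x).
Qed.

Lemma interval_pred x y a : a \in interval e x y -> a != x ->
  exists a', [/\ e a' a, a' \in interval e x y & (dist e x a').+1 = dist e x a].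
Proof.
rewrite inE => /eqP xay a_neq_x.
have [|a' a'a xa'] := @dist_pred x a; first by rewrite lt0n dist_eq0 eq_sym.
exists a'; split=> //; rewrite inE eqn_leq dist_triangle andbT.
have := dist_triangle a' a y; have := dist_edge a'a; lia.
Qed.

Lemma rad_le_ecc v : rad e <= ecc e v.
Proof.
by have := Order.TotalTheory.bigmin_le #|T| v (ecc e); rewrite minEnat.
Qed.

Lemma center_bigcap : center e = \bigcap_u disk e u (rad e).
Proof.
apply/setP => v; rewrite inE eqn_leq rad_le_ecc andbT.
apply/bigmax_leqP/bigcapP => [le_rad u _ | in_disk u _].
  by rewrite inE dist_sym; apply: le_rad.
by have := in_disk u isT; rewrite inE dist_sym.
Qed.

Variable i : nat.
Hypothesis alpha : alpha_metric e i.

Lemma farthest_interval_bound x y c a :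
  a \in interval e x y -> dist e x c < dist e a c ->
  (forall w, w \in interval e x y -> dist e w c <= dist e a c) ->
  (forall w, w \in interval e x y -> dist e x w < dist e x a ->
     dist e w c < dist e a c) ->
  dist e a c + dist e x y <= dist e y c + i + dist e x a.
Proof.
move=> Ia lt_xa max_a near_a.
have a_neq_x : a != x by apply: contraTneq lt_xa => ->; rewrite ltnn.
have [a' [a'a Ia' xa']] := interval_pred Ia a_neq_x.
have lt_a'c : dist e a' c < dist e a c by apply: near_a; rewrite // -xa'.
move: Ia Ia'; rewrite !inE => /eqP xay /eqP xa'y.
have le_a'a := dist_edge a'a.
have tri_x := dist_triangle x a' a.
have tri_c := dist_triangle a a' c; rewrite (dist_sym a a') in tri_c.
have a'_ca : a' \in interval e c a by rewrite inE !(dist_sym c); apply/eqP; lia.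
have a_a'y : a \in interval e a' y by rewrite inE; apply/eqP; lia.
have := alpha a'_ca a_a'y a'a; rewrite !(dist_sym c); lia.
Qed.

Lemma disk_dk_convex c r : dk_convex e (2 * i - 1) (disk e c r).
Proof.
move=> x y; rewrite !inE => xc yc le_xy; apply/subsetP => z Ixy_z.
rewrite inE leqNgt; apply/negP => lt_zc.
have Ixy_neq0 : interval e x y != set0 by apply/set0Pn; exists z.
have Iyx_neq0 : interval e y x != set0 by rewrite interval_sym.
have [a Ixy_a [max_a near_a]] :=
  exists_max_min_lex (fun w => dist e w c) (dist e x) Ixy_neq0.
have [b Iyx_b [max_b near_b]] :=
  exists_max_min_lex (fun w => dist e w c) (dist e y) Iyx_neq0.
have Ixy_b : b \in interval e x y by rewrite -interval_sym.
have Iyx_a : a \in interval e y x by rewrite interval_sym.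
have le_zc : dist e z c <= dist e a c := max_a z Ixy_z.
have eq_abc : dist e a c = dist e b c.
  by apply/eqP; rewrite eqn_leq max_a ?max_b.
have le_xab : dist e x a <= dist e x b.
  by rewrite leqNgt; apply/negP => /(near_a b Ixy_b); rewrite eq_abc ltnn.
have lt_xac : dist e x c < dist e a c by lia.
have lt_ybc : dist e y c < dist e b c by lia.
have bound_a := farthest_interval_bound Ixy_a lt_xac max_a near_a.
have bound_b := farthest_interval_bound Iyx_b lt_ybc max_b near_b.
rewrite (dist_sym y x) (dist_sym y b) in bound_b.
by move: Ixy_b; rewrite inE => /eqP ?; lia.
Qed.

End Distance.

Theorem lemma3 (T : finType) (e : rel T)
  (e_sym : symmetric e) (e_irr : irreflexive e)
  (e_conn : forall u v : T, connect e u v) (i : nat) :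
  alpha_metric e i ->
  (forall (v : T) (r : nat), dk_convex e (2 * i - 1) (disk e v r)) /\
  dk_convex e (2 * i - 1) (center e).
Proof.
move=> alpha; have disk_convex := disk_dk_convex e_sym e_conn alpha.
split=> //; rewrite (center_bigcap e_sym e_conn).
exact: dk_convex_bigcap.
Qed.
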